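(* Let $p$ be a prime and $t\geq 2$. Then $\mathcal S(\mathbb Z_{p^t})\subseteq \mathcal S(\mathbb Z_{p^{t-1}})$, where $\mathcal S(\mathbb Z_n)$ denotes the set of determinants of $n\times n$ circulant matrices with integer entries. *)

From mathcomp Require Import all_boot all_algebra.
Set Implicit Arguments. Unset Strict Implicit. Unset Printing Implicit Defensive.
Import GRing.Theory.
Local Open Scope ring_scope.

(* The n x n circulant matrix with first row a_0, ..., a_{n-1}:
   entry (i, j) is a_{(j - i) mod n}.  Only a 0, ..., a (n-1) matter. *)
Definition circulant (n : nat) (a : nat -> int) : 'M[int]_n :=
  \matrix_(i < n, j < n) a (((j + n - i) %% n)%N).

Definition circ_dets (n : nat) : int -> Prop :=
  fun d => exists a : nat -> int, \det (circulant n a) = d.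

From mathcomp Require Import all_boot all_algebra all_field.
From mathcomp Require Import zify.
Import GRing.Theory.
Set Implicit Arguments. Unset Strict Implicit. Unset Printing Implicit Defensive.
Local Open Scope ring_scope.

(* Let n = m p, zeta a primitive n-th root of unity and f = \sum_(u < n) a_u X^u,
   so that det C_n(a) = \prod_(k < n) f(zeta^k).  Grouping k by its residue
   mod m, with omega = zeta^m, gives \prod_(k < m) \prod_(s < p) f(omega^s zeta^k),
   and \prod_(s < p) f(omega^s x) = G(x^p) for an integer polynomial G: it is
   the determinant of the p x p X-twisted circulant of the p-sections of f, whose
   eigenvectors are the Vandermonde columns of the omega^s x.  Hence
   det C_n(a) = \prod_(k < m) G(eta^k) with eta = zeta^p a primitive m-th root
   of unity, and reducing G modulo X^m - 1 gives b with det C_m(b) = det C_n(a). *)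

Section BigopArith.
Variables (R : Type) (idx : R) (op : Monoid.com_law idx).

Lemma big_ord_mul n k (F : nat -> R) :
  \big[op/idx]_(i < n * k) F i =
  \big[op/idx]_(i < n) \big[op/idx]_(j < k) F (j + i * k)%N.
Proof.
rewrite -(big_mkord xpredT) big_nat_mul big_mkord; apply: eq_bigr => i _.
rewrite -{1}[(i * k)%N]add0n big_addn mulSn addnK big_mkord.
by apply: eq_bigr => j _; rewrite addnC.
Qed.

Lemma big_nat_periodic_shift n (F : nat -> R) :
  (forall i, F (i + n)%N = F i) ->
  forall j, \big[op/idx]_(0 <= i < n) F (i + j)%N = \big[op/idx]_(0 <= i < n) F i.
Proof.
move=> F_per; elim=> [|j IHj]; first by apply: eq_bigr => i _; rewrite addn0.
rewrite -IHj; case: n F_per {IHj} => [|n] F_per; first by rewrite !big_nil.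
rewrite big_nat_recr //= big_nat_recl //= Monoid.mulmC; congr (op _ _).
  by rewrite add0n addnS -addSn addnC F_per.
by apply: eq_bigr => i _; rewrite addnS addSn.
Qed.

End BigopArith.

Section Eigenvectors.
Variable R : idomainType.

Lemma det_eigenbasis n (A W : 'M[R]_n) (d : 'rV[R]_n) :
  \det W != 0 -> A *m W = W *m diag_mx d -> \det A = \prod_k d 0 k.
Proof.
move=> W_neq0 /(congr1 determinant).
by rewrite !det_mulmx det_diag mulrC => /(mulfI W_neq0).
Qed.

Lemma det_Vandermonde_neq0 n (a : 'rV[R]_n) :
  injective (a 0) -> \det (Vandermonde n a) != 0.
Proof.
move=> a_inj; rewrite det_Vandermonde.
apply/prodf_neq0 => i _; apply/prodf_neq0 => j lt_ij.
by rewrite subr_eq0; apply: contraTneq lt_ij => /a_inj ->; rewrite ltnn.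
Qed.

Lemma prim_root_expr_inj n (z x : R) : n.-primitive_root z -> x != 0 ->
  injective (fun k : 'I_n => z ^+ k * x).
Proof.
move=> z_prim x_neq0 i j /(mulIf x_neq0) /eqP.
by rewrite (eq_prim_root_expr z_prim) !modn_small // => /eqP /val_inj.
Qed.

End Eigenvectors.

(* Entries below the diagonal are multiplied by [w], so that [(z ^+ j)_j] is an
   eigenvector whenever [z ^+ n = w]; [w = 1] gives back [circulant]. *)
Definition twisted_circulant (R : pzRingType) n (w : R) (c : nat -> R) : 'M[R]_n :=
  \matrix_(i < n, j < n) (c ((j + n - i) %% n)%N * (if (j < i)%N then w else 1)).

Lemma map_circulant (R : pzRingType) n (a : nat -> int) :
  map_mx intr (circulant n a) = twisted_circulant n (1 : R) (fun u => (a u)%:~R).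
Proof. by apply/matrixP => i j; rewrite !mxE if_same mulr1. Qed.

Lemma det_twisted_circulant (R : idomainType) n (w : R) (c : nat -> R)
    (z : 'I_n -> R) :
  injective z -> (forall k, z k ^+ n = w) ->
  \det (twisted_circulant n w c) = \prod_k \sum_(u < n) c u * z k ^+ u.
Proof.
move=> z_inj z_root.
pose V := Vandermonde n (\row_k z k).
have V_neq0 : \det V != 0.
  by apply: det_Vandermonde_neq0 => i j; rewrite !mxE => /z_inj.
rewrite (det_eigenbasis V_neq0 (d := \row_k \sum_(u < n) c u * z k ^+ u)).
  by apply: eq_bigr => k _; rewrite mxE.
apply/matrixP => i k; rewrite mul_mx_diag !mxE mulr_sumr.
pose term u := c (u %% n)%N * z k ^+ (i + u %% n).
have term_shift (j : 'I_n) :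
    twisted_circulant n w c i j * V j k = term (j + (n - i))%N.
  have [i_lt_n j_lt_n] := (ltn_ord i, ltn_ord j).
  rewrite !mxE /term addnBA; last exact: ltnW.
  have [lt_ji | le_ij] := ltnP j i.
    have -> : ((j + n - i) %% n = j + n - i)%N by rewrite modn_small //; lia.
    have -> : (i + (j + n - i) = j + n)%N by lia.
    by rewrite exprD z_root mulrAC mulrA.
  have -> : ((j + n - i) %% n = j - i)%N.
    by rewrite -addnBAC // modnDr modn_small //; lia.
  by rewrite mulr1 subnKC.
rewrite (eq_bigr _ (fun j _ => term_shift j)) -(big_mkord xpredT (term \o addn^~ _)).
rewrite big_nat_periodic_shift => [|u]; last by rewrite /term modnDr.
by rewrite big_mkord; apply: eq_bigr => u _; rewrite /term modn_small // exprD mulrCA.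
Qed.

Lemma det_circulant (R : idomainType) n (a : nat -> int) (zeta : R) :
  n.-primitive_root zeta ->
  (\det (circulant n a))%:~R = \prod_(k < n) \sum_(u < n) (a u)%:~R * (zeta ^+ k) ^+ u.
Proof.
move=> zeta_prim; rewrite -(det_map_mx (intr : {rmorphism int -> R})) map_circulant.
apply: det_twisted_circulant => [i j|k].
  rewrite -[zeta ^+ i]mulr1 -[zeta ^+ j]mulr1.
  by apply: prim_root_expr_inj; rewrite ?oner_eq0.
by rewrite exprAC (prim_expr_order zeta_prim) expr1n.
Qed.

Definition int_horner (R : comNzRingType) (x : R) : {rmorphism {poly int} -> R} :=
  horner_eval x \o map_poly intr.

Lemma int_hornerE (R : comNzRingType) (x : R) q : int_horner x q = (map_poly intr q).[x].
Proof. by []. Qed.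

Definition section_poly (a : nat -> int) p m r : {poly int} :=
  \sum_(q < m) (a (r + q * p)%N)%:P * 'X^q.

Lemma sum_section_poly (R : comNzRingType) a p m (y : R) :
  \sum_(r < p) int_horner (y ^+ p) (section_poly a p m r) * y ^+ r =
  \sum_(u < m * p) (a u)%:~R * y ^+ u.
Proof.
rewrite [RHS](big_ord_mul _ _ _ (fun u => (a u)%:~R * y ^+ u)) exchange_big.
apply: eq_bigr => r _.
rewrite rmorph_sum mulr_suml; apply: eq_bigr => q _.
rewrite rmorphM rmorphXn !int_hornerE map_polyC map_polyX hornerC hornerX /=.
by rewrite -exprM mulnC exprD mulrAC mulrA.
Qed.

(* [\prod_(s < p) f (omega ^+ s * 'X)] as a polynomial in ['X ^+ p]; defining it
   as a determinant makes its integrality evident. *)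
Definition norm_poly a p m : {poly int} :=
  \det (twisted_circulant p 'X (section_poly a p m)).

Lemma int_horner_norm_poly (R : idomainType) a p m (omega x : R) :
  p.-primitive_root omega -> x != 0 ->
  int_horner (x ^+ p) (norm_poly a p m) =
  \prod_(s < p) \sum_(u < m * p) (a u)%:~R * (omega ^+ s * x) ^+ u.
Proof.
move=> omega_prim x_neq0; rewrite /norm_poly -det_map_mx.
have root_x (s : 'I_p) : (omega ^+ s * x) ^+ p = x ^+ p.
  by rewrite exprMn exprAC (prim_expr_order omega_prim) expr1n mul1r.
have -> : map_mx (int_horner (x ^+ p)) (twisted_circulant p 'X (section_poly a p m)) =
          twisted_circulant p (x ^+ p) (int_horner (x ^+ p) \o section_poly a p m).
  apply/matrixP => i j; rewrite !mxE rmorphM; case: ifP => _; last by rewrite rmorph1.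
  by rewrite [int_horner _ 'X]int_hornerE map_polyX hornerX.
rewrite (det_twisted_circulant _ (prim_root_expr_inj omega_prim x_neq0) root_x).
by apply: eq_bigr => s _; rewrite -[x ^+ p](root_x s) sum_section_poly.
Qed.

(* The coefficients of [G %% ('X^m - 1)]. *)
Definition wrap_coef (G : {poly int}) m (l : nat) : int :=
  \sum_(j < size G | (j %% m == l)%N) G`_j.

Lemma sum_wrap_coef (R : comNzRingType) G m (w : R) : (0 < m)%N -> w ^+ m = 1 ->
  \sum_(l < m) (wrap_coef G m l)%:~R * w ^+ l = int_horner w G.
Proof.
move=> m_gt0 w_root; have size_map : (size (map_poly intr G : {poly R}) <= size G)%N.
  exact: size_poly.
rewrite int_hornerE (horner_coef_wide _ size_map).
rewrite (partition_big (fun j : 'I_(size G) => Ordinal (ltn_pmod j m_gt0)) xpredT) //=.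
apply: eq_bigr => l _; rewrite rmorph_sum mulr_suml; apply: eq_bigr => j /eqP <-.
by rewrite coef_map /= expr_mod.
Qed.

Lemma circ_dets_mulr m p d : (0 < m)%N -> (0 < p)%N ->
  circ_dets (m * p) d -> circ_dets m d.
Proof.
move=> m_gt0 p_gt0 [a <-].
have mp_gt0 : (0 < m * p)%N by rewrite muln_gt0 m_gt0.
have [zeta zeta_prim] := C_prim_root_exists mp_gt0.
have zeta_neq0 : zeta != 0 by rewrite (prim_root_eq0 zeta_prim) -lt0n.
have eta_prim : m.-primitive_root (zeta ^+ p).
  by have := exp_prim_root zeta_prim p; rewrite gcdnMl mulnK.
have omega_prim : p.-primitive_root (zeta ^+ m).
  by have := exp_prim_root zeta_prim m; rewrite gcdnMr mulKn.
exists (wrap_coef (norm_poly a p m) m); apply: (@intr_inj algC).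
rewrite (det_circulant _ eta_prim) (det_circulant _ zeta_prim).
transitivity (\prod_(k < m) int_horner ((zeta ^+ k) ^+ p) (norm_poly a p m)).
  apply: eq_bigr => k _; rewrite sum_wrap_coef //; first by rewrite exprAC.
  by rewrite exprAC (prim_expr_order eta_prim) expr1n.
under eq_bigr => k _
  do rewrite (int_horner_norm_poly _ _ omega_prim (expf_neq0 _ zeta_neq0)).
pose f k := \sum_(u < m * p) (a u)%:~R * (zeta ^+ k) ^+ u.
rewrite -(big_mkord xpredT f) [X in \prod_(0 <= _ < X) _]mulnC big_mkord.
rewrite (big_ord_mul _ _ _ f) exchange_big; apply: eq_bigr => s _.
by apply: eq_bigr => k _; rewrite /f -exprM -exprD addnC (mulnC m s).
Qed.

Theorem proposition1p4 (p t : nat) (hp : prime p) (ht : (2 <= t)%N) :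
  forall d : int, circ_dets (p ^ t) d -> circ_dets (p ^ (t - 1)) d.
Proof.
move=> d; have p_gt0 := prime_gt0 hp.
rewrite -[in circ_dets (p ^ t)](subnK (ltnW ht)) addn1 expnSr.
by apply: circ_dets_mulr; rewrite // expn_gt0 p_gt0.
Qed.
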